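(* Let $G$ be a connected graph, and let $L$ be a list-assignment with $|L(u)|\ge\deg(u)+1$ for all $u\in V(G)$ and $|L(v)|\ge\deg(v)+2$ for some vertex $v$. Let $\alpha,\beta$ be two unfrozen $L$-colourings. Fix $w\in V(G)$ and let $P$ be a shortest $v,w$-path. There exists a recolouring sequence $\mathcal{S}$ from $\alpha$ to some $L$-colouring $\gamma$ such that (i) $\gamma(w)=\beta(w)$, (ii) $v$ is unfrozen under $\gamma$, (iii) every vertex recoloured during $\mathcal{S}$ belongs to $V(P)\cup(N(w)\cap\alpha^{-1}(\beta(w)))$, and (iv) $|\mathcal{S}|\le\deg(w)+2+2|V(P)|$.
   Context: An $L$-colouring is a proper colouring $\varphi$ with $\varphi(v)\in L(v)$ for all $v$. A recolouring sequence is a sequence of single-vertex recolouring steps, each changing the colour of one vertex to another colour of its list so that the colouring remains proper; $|\mathcal{S}|$ is its number of steps. A vertex $u$ is frozen under $\varphi$ if every colour of $L(u)\setminus\{\varphi(u)\}$ appears on a neighbour of $u$, and unfrozen otherwise; a colouring is unfrozen if some vertex is unfrozen under it. *)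

From mathcomp Require Import all_boot.
Set Implicit Arguments. Unset Strict Implicit. Unset Printing Implicit Defensive.

Section Defs.
Variables (T C : finType).

Definition simple_graph (e : rel T) : Prop := symmetric e /\ irreflexive e.
Definition connected_graph (e : rel T) : Prop := forall x y, connect e x y.

Definition deg (e : rel T) (u : T) : nat := #|[set x | e u x]|.

Definition Lcolouring (e : rel T) (L : T -> {set C}) (phi : T -> C) : Prop :=
  (forall u, phi u \in L u) /\ (forall u x, e u x -> phi u != phi x).

Definition frozen (e : rel T) (L : T -> {set C}) (phi : T -> C) (u : T) : Prop :=
  forall c, c \in L u -> c != phi u -> exists x, e u x /\ phi x = c.
Definition unfrozen e L phi u : Prop := ~ frozen e L phi u.
Definition unfrozen_colouring e L phi : Prop := exists u, unfrozen e L phi u.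

Definition recolour (phi : T -> C) (x : T) (c : C) : T -> C :=
  fun y => if y == x then c else phi y.

Fixpoint recol_seq (e : rel T) (L : T -> {set C}) (phi : T -> C)
    (s : seq (T * C)) : Prop :=
  match s with
  | [::] => True
  | (x, c) :: s' => c != phi x /\ Lcolouring e L (recolour phi x c)
                    /\ recol_seq e L (recolour phi x c) s'
  end.

Definition recol_final (phi : T -> C) (s : seq (T * C)) : T -> C :=
  foldl (fun f p => recolour f p.1 p.2) phi s.

Definition shortest_path (e : rel T) (v w : T) (p : seq T) : Prop :=
  path e v p /\ last v p = w /\
  forall q, path e v q -> last v q = w -> size p <= size q.

End Defs.

(* Since |L v| >= deg v + 2, v is unfrozen under every colouring, and
   unfrozenness propagates along a path: if y is unfrozen and its neighbour z is
   frozen, then z sees every colour of L z :\ phi z on exactly one neighbour, so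
   recolouring y to a free colour frees z.

   To give w the colour c = beta w, first recolour the unfrozen neighbours of w
   coloured c.  If w is then unfrozen, recolouring it frees its remaining
   c-neighbours, which are recoloured before w takes c.  Otherwise w is frozen
   and has a unique c-neighbour x; propagating unfrozenness along P up to the
   predecessor u of w and recolouring u frees w.  If u received the colour c,
   moving w to the former colour of u frees x, and once x is recoloured only u
   can block c, so one more propagation along P frees u.  Minimality of P keeps
   the propagations away from the closed neighbourhood of w. *)

From mathcomp Require Import all_boot zify.
Set Implicit Arguments. Unset Strict Implicit. Unset Printing Implicit Defensive.

Section Recolouring.
Variables (T C : finType) (e : rel T) (L : T -> {set C}).

Local Notation col := (Lcolouring e L).

Definition reach (A : pred T) (phi psi : T -> C) (n : nat) : Prop :=
  exists2 s : seq (T * C), recol_seq e L phi s &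
    [/\ recol_final phi s = psi, size s <= n & forall st, st \in s -> A st.1].

Lemma recol_seq_cat phi s1 s2 :
  recol_seq e L phi s1 -> recol_seq e L (recol_final phi s1) s2 ->
  recol_seq e L phi (s1 ++ s2).
Proof.
elim: s1 phi => [|[x c] s IH] phi //= [? [? ?]] ?.
by do 2!split=> //; apply: IH.
Qed.

Lemma reach_refl A phi : reach A phi phi 0.
Proof. by exists [::]. Qed.

Lemma reach_trans A phi psi chi n m :
  reach A phi psi n -> reach A psi chi m -> reach A phi chi (n + m).
Proof.
move=> [s1 r1 [f1 z1 a1]] [s2 r2 [f2 z2 a2]].
exists (s1 ++ s2); first by apply: recol_seq_cat; rewrite ?f1.
split; first by rewrite /recol_final foldl_cat -/(recol_final phi s1) f1.
  by rewrite size_cat leq_add.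
by move=> st; rewrite mem_cat => /orP [/a1 | /a2].
Qed.

Lemma reach_mono (A B : pred T) phi psi n m :
  reach A phi psi n -> {subset A <= B} -> n <= m -> reach B phi psi m.
Proof.
move=> [s r [f z a]] AB nm; exists s => //; split=> //; first exact: leq_trans nm.
by move=> st /a /AB.
Qed.

Lemma reach_col A phi psi n : col phi -> reach A phi psi n -> col psi.
Proof.
move=> cp [s r [<- _ _]].
by elim: s phi cp r => [|[x c] s IH] phi cp //= [_ [/IH]].
Qed.

Lemma reach_agree A phi psi n y : reach A phi psi n -> ~~ A y -> psi y = phi y.
Proof.
move=> [s _ [<- _ a]] nAy; elim: s phi a => [|[x c] s IH] phi a //=.
rewrite IH => [|st st_s]; last by apply: a; rewrite inE st_s orbT.
rewrite /recolour; case: eqP => // yx.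
by move: nAy; rewrite yx (a (x, c)) ?inE ?eqxx.
Qed.

Definition free_colour (phi : T -> C) y d : bool :=
  [&& d \in L y, d != phi y & [forall x, e y x ==> (phi x != d)]].

Definition has_free_colour phi y : bool := [exists d, free_colour phi y d].

Lemma free_colourP phi y d :
  reflect [/\ d \in L y, d != phi y & forall x, e y x -> phi x != d]
          (free_colour phi y d).
Proof.
apply: (iffP and3P) => [[dL dn /forallP nd] | [dL dn nd]]; split=> //.
  by move=> x; apply/implyP/nd.
by apply/forallP => x; apply/implyP/nd.
Qed.

Lemma frozenP phi y : reflect (frozen e L phi y) (~~ has_free_colour phi y).
Proof.
apply: (iffP existsPn) => [nofree d dL dn | fr d].
  move: (nofree d); rewrite /free_colour dL dn /= => /forallPn [x].
  by rewrite negb_imply negbK => /andP [eyx /eqP pxd]; exists x.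
apply/free_colourP => -[dL dn nd]; have [x [eyx pxd]] := fr d dL dn.
by move: (nd x eyx); rewrite pxd eqxx.
Qed.

Lemma unfrozenP phi y : reflect (unfrozen e L phi y) (has_free_colour phi y).
Proof.
apply: (iffP idP) => [h /frozenP | h]; first by rewrite h.
by apply: contra_notT h => /frozenP.
Qed.

Lemma free_unfrozen phi y d : free_colour phi y d -> unfrozen e L phi y.
Proof. by move=> fd; apply/unfrozenP/existsP; exists d. Qed.

Lemma frozen_eq_nbhd phi psi y : psi y = phi y -> (forall x, e y x -> psi x = phi x) ->
  frozen e L phi y -> frozen e L psi y.
Proof.
move=> eq_y eq_nbrs fr d dL; rewrite eq_y => dn.
by have [x [eyx <-]] := fr d dL dn; exists x; rewrite eq_nbrs.
Qed.

Lemma recolour_id (phi : T -> C) y d : recolour phi y d y = d.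
Proof. by rewrite /recolour eqxx. Qed.

Lemma recolour_ne (phi : T -> C) y d z : z != y -> recolour phi y d z = phi z.
Proof. by rewrite /recolour => /negbTE ->. Qed.

Lemma frozen_recolour_far phi y d z : z != y -> ~~ e z y ->
  frozen e L (recolour phi y d) z <-> frozen e L phi z.
Proof.
move=> zy nezy; have far x : e z x -> recolour phi y d x = phi x.
  by move=> ezx; apply: recolour_ne; apply: contraNneq nezy => <-.
by split; apply: frozen_eq_nbhd; rewrite ?recolour_ne // => x /far ->.
Qed.

Lemma col_same_colour_nonadj phi x y : col phi -> phi x = phi y -> ~~ e x y.
Proof. by move=> cp phi_xy; apply/negP => /(cp.2 x y); rewrite phi_xy eqxx. Qed.

Lemma frozen_cover phi y : frozen e L phi y -> L y :\ phi y \subset phi @: [set x | e y x].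
Proof.
move=> fr; apply/subsetP => d; rewrite !inE => /andP [dn dL].
by have [x [eyx <-]] := fr d dL dn; apply/imsetP; exists x; rewrite ?inE.
Qed.

Lemma big_list_unfrozen phi v : deg e v + 2 <= #|L v| -> unfrozen e L phi v.
Proof.
move=> Lv fr; set N := [set x | e v x]; set S := L v :\ phi v.
have := subset_leq_card (frozen_cover fr); have := leq_imset_card phi N.
by move: Lv; rewrite /deg -/N (cardsD1 (phi v) (L v)) -/S; case: (_ \in _) => /=; lia.
Qed.

Section SimpleGraph.
Hypotheses (e_sym : symmetric e) (e_irr : irreflexive e).

Lemma recolour_col phi y d : col phi -> free_colour phi y d -> col (recolour phi y d).
Proof.
move=> [cL ce] /free_colourP [dL _ nd]; split=> [u | u x eux]; rewrite /recolour.
  by case: eqP => [->|].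
case: (eqVneq u y) => [uy|uy]; case: (eqVneq x y) => [xy|xy].
- by move: eux; rewrite uy xy e_irr.
- by rewrite eq_sym nd // -uy.
- by rewrite nd // e_sym -xy.
- exact: ce.
Qed.

Lemma reach_step (A : pred T) phi y d :
  A y -> col phi -> free_colour phi y d -> reach A phi (recolour phi y d) 1.
Proof.
move=> Ay cp fd; exists [:: (y, d)]; last by split=> // st; rewrite inE => /eqP ->.
by split; [case/free_colourP: fd | split; first exact: recolour_col].
Qed.

Hypothesis L_big : forall u, deg e u + 1 <= #|L u|.

(* The at most deg y neighbour colours cover the at least deg y colours of
   L y :\ phi y, so they are distinct and exactly fill it. *)
Lemma frozen_nbr_colours phi y : col phi -> frozen e L phi y ->
  (forall z, e y z -> phi z \in L y) /\
  (forall x z, e y x -> e y z -> phi x = phi z -> x = z).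
Proof.
move=> cp fr; set N := [set x | e y x]; set S := L y :\ phi y.
have S_sub : S \subset phi @: N := frozen_cover fr.
have N_S : #|N| <= #|S|.
  by have := L_big y; rewrite /deg -/N (cardsD1 (phi y) (L y)) -/S (cp.1 y) add1n addn1.
have im_N : #|phi @: N| <= #|N| := leq_imset_card _ _.
have S_eq : S = phi @: N by apply/eqP; rewrite eqEcard S_sub (leq_trans im_N).
split=> [z eyz | x z eyx eyz].
  suff : phi z \in S by rewrite inE => /andP [].
  by rewrite S_eq; apply/imsetP; exists z; rewrite ?inE.
have /imset_injP inj : #|phi @: N| == #|N| by rewrite eqn_leq im_N -S_eq.
by apply: inj; rewrite ?inE.
Qed.

Lemma frozen_recolour_nbr phi y z d : col phi -> frozen e L phi y -> e y z ->
  d != phi z -> free_colour (recolour phi z d) y (phi z).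
Proof.
move=> cp fr eyz dn; have [nbrL nbr_inj] := frozen_nbr_colours cp fr.
have yz : y != z by apply: contraTneq eyz => ->; rewrite e_irr.
apply/free_colourP; split; first exact: nbrL.
  by rewrite recolour_ne // eq_sym; apply: cp.2.
move=> x eyx; case: (eqVneq x z) => [->|xz]; first by rewrite recolour_id.
by rewrite recolour_ne //; apply: contra_neq (nbr_inj _ _ eyx eyz) xz.
Qed.

Lemma reach_unfrozen_along_path q0 q : (forall phi, unfrozen e L phi q0) -> path e q0 q ->
  forall phi, col phi -> exists2 psi,
    reach [pred y | y \in belast q0 q] phi psi (size q) & unfrozen e L psi (last q0 q).
Proof.
move=> q0_unf; elim/last_ind: q => [|q z IH] /=.
  by move=> _ phi _; exists phi; [exact: reach_refl | exact: q0_unf].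
rewrite rcons_path last_rcons belast_rcons size_rcons => /andP [q_path yz] phi cp.
have [psi psi_reach y_unf] := IH q_path phi cp.
have psi_col := reach_col cp psi_reach.
have grow : {subset [pred y | y \in belast q0 q] <= [pred y | y \in q0 :: q]}.
  by move=> y /mem_belast.
have [/unfrozenP z_unf | /frozenP z_fr] := boolP (has_free_colour psi z).
  by exists psi => //; apply: reach_mono psi_reach _ _.
set y := last q0 q in y_unf yz *.
move/unfrozenP/existsP: y_unf => [d fd].
exists (recolour psi y d).
  rewrite -addn1; apply: reach_trans (reach_mono psi_reach grow (leqnn _)) _.
  by apply: reach_step psi_col fd; rewrite /= mem_last.
apply: free_unfrozen (frozen_recolour_nbr psi_col z_fr _ _); first by rewrite e_sym.
by case/free_colourP: fd.
Qed.

Section ColouredNeighbours.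
Variables (w : T) (c : C).

Definition coloured_nbrs phi := [set y | e w y && (phi y == c)].
Local Notation N := coloured_nbrs.
Local Notation Nw phi := [pred y | (y \in N phi) || (y == w)].

Lemma coloured_nbrs_eq phi psi : (forall y, e w y -> psi y = phi y) -> N psi = N phi.
Proof.
by move=> eq_nbrs; apply/setP => y; rewrite !inE; case: (boolP (e w y)) => //= /eq_nbrs ->.
Qed.

Lemma reach_clear_nbrs phi : col phi -> exists2 psi,
  reach [pred y | y \in N phi] phi psi (#|N phi| - #|N psi|) &
  {subset N psi <= N phi} /\ forall y, y \in N psi -> frozen e L phi y /\ frozen e L psi y.
Proof.
have [n] := ubnP #|N phi|; elim: n phi => // n IH phi lt_n cp.
case: (pickP [pred y | (y \in N phi) && has_free_colour phi y]) => [y | all_frozen].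
  move=> /andP [y_N /existsP [d fd]].
  set phi1 := recolour phi y d.
  have phi_y : phi y = c by move: y_N; rewrite inE => /andP [_ /eqP].
  have N1_sub z : z \in N phi1 -> z != y /\ z \in N phi.
    rewrite !inE /phi1 /recolour; case: (eqVneq z y) => [->|//].
    by case/free_colourP: fd => _ dn _ /andP [_ /eqP dc]; rewrite dc phi_y eqxx in dn.
  have lt_N1 : #|N phi1| < #|N phi|.
    rewrite (cardsD1 y (N phi)) y_N add1n ltnS subset_leq_card //.
    by apply/subsetP => z /N1_sub [zy z_N]; rewrite in_setD1 zy.
  have [|psi psi_reach [psi_sub psi_fr]] := IH phi1 _ (recolour_col cp fd); first lia.
  have le_psi : #|N psi| <= #|N phi1| by apply: subset_leq_card; apply/subsetP.
  exists psi.
    have step := reach_step (A := [pred z | z \in N phi]) y_N cp fd.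
    have psi_reach' : reach [pred z | z \in N phi] phi1 psi (#|N phi1| - #|N psi|).
      by apply: (reach_mono psi_reach) => // z /N1_sub [].
    by apply: (reach_mono (reach_trans step psi_reach')) => //; lia.
  split=> [z /psi_sub /N1_sub [] // | z z_psi].
  have [zy z_N] := N1_sub z (psi_sub z z_psi); have [fr1 fr_psi] := psi_fr z z_psi.
  have nezy : ~~ e z y.
    by apply: (col_same_colour_nonadj cp); move: z_N; rewrite inE phi_y => /andP [_ /eqP].
  by split=> //; apply/(frozen_recolour_far _ d zy nezy).
have all_fr y : y \in N phi -> frozen e L phi y.
  by move=> y_N; apply/frozenP/negbT; move: (all_frozen y); rewrite /= y_N.
by exists phi; [rewrite subnn; apply: reach_refl | split=> // y /all_fr].
Qed.

Lemma coloured_nbrs_recolour_w phi d : N (recolour phi w d) = N phi.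
Proof.
apply: coloured_nbrs_eq => y ewy; rewrite recolour_ne //.
by apply: contraTneq ewy => ->; rewrite e_irr.
Qed.

Hypothesis c_in : c \in L w.

Lemma reach_colour_w_unfrozen_nbrs phi : col phi -> c != phi w ->
  (forall y, y \in N phi -> unfrozen e L phi y) ->
  exists2 psi, reach (Nw phi) phi psi (#|N phi| + 1) & psi w = c.
Proof.
move=> cp cw N_unf.
have [phi1 R1 [N1_sub N1_fr]] := reach_clear_nbrs cp.
have phi1_w : phi1 w = phi w by apply: (reach_agree R1); rewrite /= inE e_irr.
have fc : free_colour phi1 w c.
  apply/free_colourP; split; rewrite ?phi1_w // => y ewy; apply/negP => /eqP phi1_y.
  have y_N1 : y \in N phi1 by rewrite inE ewy phi1_y eqxx.
  by have [fr _] := N1_fr y y_N1; apply: N_unf fr; apply: N1_sub.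
exists (recolour phi1 w c); last exact: recolour_id.
have R1' : reach (Nw phi) phi phi1 #|N phi|.
  by apply: (reach_mono R1 _ (leq_subr _ _)) => y; rewrite !inE => ->.
by apply: reach_trans R1' (reach_step _ (reach_col cp R1) fc); rewrite /= eqxx orbT.
Qed.

Lemma reach_colour_w_frozen_nbrs phi x : col phi -> c != phi w -> unfrozen e L phi w ->
  (forall y, y \in N phi -> frozen e L phi y) -> x \in N phi ->
  exists2 psi, reach (Nw phi) phi psi (#|N phi| + 2) & psi w = c.
Proof.
move=> cp cw /unfrozenP/existsP [d fd] N_fr x_N.
have [_ dw d_nbrs] := elimT (free_colourP _ _ _) fd.
have dc : d != c by move: x_N; rewrite inE => /andP [ewx /eqP <-]; rewrite eq_sym d_nbrs.
set phi1 := recolour phi w d.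
have N1 : N phi1 = N phi := coloured_nbrs_recolour_w phi d.
have N1_unf y : y \in N phi1 -> unfrozen e L phi1 y.
  rewrite N1 => y_N; apply: free_unfrozen (frozen_recolour_nbr cp (N_fr y y_N) _ dw).
  by move: y_N; rewrite inE e_sym => /andP [].
have cw1 : c != phi1 w by rewrite /phi1 recolour_id eq_sym.
have [psi R psi_w] := reach_colour_w_unfrozen_nbrs (recolour_col cp fd) cw1 N1_unf.
exists psi => //; rewrite N1 in R.
have step := reach_step (A := Nw phi) (introT orP (or_intror (eqxx w))) cp fd.
by apply: (reach_mono (reach_trans step R)) => //; rewrite addnC -addnA.
Qed.

Lemma reach_colour_w phi : col phi -> c != phi w ->
  (forall y, y \in N phi -> unfrozen e L phi y) \/
  (unfrozen e L phi w /\ forall y, y \in N phi -> frozen e L phi y) ->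
  exists2 psi, reach (Nw phi) phi psi (#|N phi| + 2) & psi w = c.
Proof.
move=> cp cw N_cases.
have [N_unf | [x [w_unf N_fr x_N]]] : (forall y, y \in N phi -> unfrozen e L phi y) \/
    exists x, [/\ unfrozen e L phi w, forall y, y \in N phi -> frozen e L phi y & x \in N phi].
  case: N_cases => [|[w_unf N_fr]]; first by left.
  have [N0 | [x x_N]] := set_0Vmem (N phi); last by right; exists x.
  by left => y; rewrite N0 inE.
  have [psi R psi_w] := reach_colour_w_unfrozen_nbrs cp cw N_unf.
  by exists psi => //; apply: (reach_mono R) => //; rewrite leq_add2l.
exact: reach_colour_w_frozen_nbrs x_N.
Qed.

End ColouredNeighbours.

End SimpleGraph.
End Recolouring.

Lemma last_take (A : Type) (x : A) s n : n <= size s -> last x (take n s) = nth x (x :: s) n.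
Proof.
move=> ns; rewrite -nth_last size_takel //.
by case: n ns => [|n] ns /=; rewrite ?take0 ?nth_take.
Qed.

Lemma belast_take (A : Type) (x : A) s n : n <= size s -> belast x (take n s) = take n (x :: s).
Proof. by elim: s x n => [|y s IH] x [|n] //= /IH ->. Qed.

Section ShortestPath.
Variables (T : finType) (e : rel T) (v w : T) (p : seq T).
Hypothesis sp : shortest_path e v w p.
Local Notation P := (v :: p).

Lemma shortest_path_nth_last : nth v P (size p) = w.
Proof. by have [_ [<- _]] := sp; rewrite (nth_last v P). Qed.

Lemma shortest_path_edge i : i < size p -> e (nth v P i) (nth v P i.+1).
Proof. by have [pp _] := sp; apply: (pathP v pp). Qed.

Lemma shortest_path_no_shortcut i j : i.+1 < j -> j <= size p ->
  nth v P i != nth v P j /\ ~~ e (nth v P i) (nth v P j).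
Proof.
move=> ij jp; have [pp [pw short]] := sp.
have [pi pj] : path e v (take i p) /\ path e (nth v P j) (drop j p).
  move: pp; rewrite -{1}(cat_take_drop j p) cat_path last_take // => /andP [/(take_path i)].
  by rewrite take_takel //; lia.
have lj : last (nth v P j) (drop j p) = w.
  by rewrite -last_take // -last_cat cat_take_drop.
have shortcut (s : seq T) : path e (nth v P i) s -> last (nth v P i) s = w ->
    size p <= i + size s.
  move=> ps ls; have := short (take i p ++ s).
  rewrite cat_path last_cat last_take ?ps ?ls ?(take_path i pp); last lia.
  by rewrite size_cat size_takel; [apply | lia].
split; apply/negP.
  move=> /eqP eq_ij; move: shortcut; rewrite eq_ij => /(_ _ pj lj).
  by rewrite size_drop; lia.
move=> eij; have /= := shortcut (nth v P j :: drop j p).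
by rewrite eij pj lj size_drop => /(_ isT erefl); lia.
Qed.

Lemma shortest_path_take_far i y : symmetric e -> i <= size p -> y \in take i.-1 P ->
  y != nth v P i /\ ~~ e (nth v P i) y.
Proof.
move=> e_sym ip y_take; have y_P : y \in P := mem_take y_take.
have y_idx : index y P < i.-1.
  rewrite -[P in index _ P](cat_take_drop i.-1) index_cat y_take.
  by rewrite -[X in _ < X](@size_takel i.-1 _ P) ?index_mem //=; lia.
rewrite -(nth_index v y_P) e_sym; apply: shortest_path_no_shortcut => //; lia.
Qed.

End ShortestPath.

Section TargetColour.
Variables (T C : finType) (e : rel T) (L : T -> {set C}).
Hypotheses (e_sym : symmetric e) (e_irr : irreflexive e).
Hypothesis L_big : forall u, deg e u + 1 <= #|L u|.
Variables (v w : T) (p : seq T) (alpha : T -> C) (c : C).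
Hypotheses (L_v : deg e v + 2 <= #|L v|) (alpha_col : Lcolouring e L alpha).
Hypotheses (c_in : c \in L w) (sp : shortest_path e v w p).

Local Notation col := (Lcolouring e L).
Local Notation P := (v :: p).
Local Notation N := (coloured_nbrs e w c).
Local Notation A := [pred y | (y \in P) || (e w y && (alpha y == c))].
Local Notation bound := (deg e w + 2 + 2 * size P).

Definition w_recolourable : Prop :=
  exists2 gamma, reach e L A alpha gamma bound & gamma w = c.

Lemma v_unfrozen phi : unfrozen e L phi v.
Proof. exact: big_list_unfrozen. Qed.

Lemma w_in_P : w \in P.
Proof. by have [_ [<- _]] := sp; apply: mem_last. Qed.

Lemma coloured_nbrs_in_A phi n y : reach e L A alpha phi n -> y \in N phi -> A y.
Proof.
move=> R y_N; apply/negPn/negP => nAy; have phi_y := reach_agree R nAy.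
by move: nAy y_N; rewrite !inE phi_y => /norP [_ /negbTE ->].
Qed.

Lemma w_recolourable_finish phi n : reach e L A alpha phi n -> c != phi w ->
  (forall y, y \in N phi -> unfrozen e L phi y) \/
  (unfrozen e L phi w /\ forall y, y \in N phi -> frozen e L phi y) ->
  n + #|N phi| + 2 <= bound -> w_recolourable.
Proof.
move=> R cw N_cases le_bound.
have [psi R' psi_w] := reach_colour_w e_sym e_irr L_big c_in (reach_col alpha_col R) cw N_cases.
have R'A : reach e L A phi psi (#|N phi| + 2).
  apply: (reach_mono R') => // y /orP [/(coloured_nbrs_in_A R) // | /eqP ->].
  by rewrite inE w_in_P.
by exists psi => //; apply: (reach_mono (reach_trans R R'A)); rewrite ?addnA.
Qed.

Lemma w_recolourable_single phi n x : reach e L A alpha phi n -> c != phi w ->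
  (forall y, y \in N phi -> y = x) -> unfrozen e L phi x \/ unfrozen e L phi w ->
  n + 3 <= bound -> w_recolourable.
Proof.
move=> R cw N_x x_or_w le_bound.
have N_le1 : #|N phi| <= 1.
  by rewrite -(cards1 x); apply/subset_leq_card/subsetP => y /N_x ->; rewrite inE.
apply: (w_recolourable_finish R cw); last by lia.
have [/unfrozenP x_unf | /frozenP x_fr] := boolP (has_free_colour e L phi x).
  by left => y /N_x ->.
by case: x_or_w => // w_unf; right; split=> // y /N_x ->.
Qed.

Local Notation u := (nth v P (size p).-1).

Lemma u_in_P : u \in P.
Proof. by apply: mem_nth; rewrite /= ltnS leq_pred. Qed.

Lemma reach_unfrozen_u phi : col phi -> exists2 psi, reach e L A phi psi (size p).-1 &
  [/\ unfrozen e L psi u, psi w = phi w & forall y, e w y -> psi y = phi y].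
Proof.
move=> cp; have [pp _] := sp.
have [psi R u_unf] :=
  reach_unfrozen_along_path e_sym e_irr L_big v_unfrozen (take_path (size p).-1 pp) cp.
rewrite last_take ?leq_pred // in u_unf.
rewrite belast_take ?size_takel ?leq_pred // in R.
have near_w y : (y == w) || e w y -> psi y = phi y.
  move=> y_near; apply: (reach_agree R); apply: contraL y_near => /=.
  case/(shortest_path_take_far sp e_sym (leqnn _)); rewrite (shortest_path_nth_last sp).
  by move=> /negbTE -> /negbTE ->.
exists psi; last by split=> // [|y ewy]; apply: near_w; rewrite ?eqxx ?ewy ?orbT.
by apply: (reach_mono R) => // y /mem_take y_P; rewrite inE y_P.
Qed.

Section PenultimateVertex.
Hypothesis p_nonempty : 0 < size p.

Lemma w_u_edge : e w u.
Proof.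
have := shortest_path_edge sp (_ : (size p).-1 < size p); rewrite ltn_predL.
by rewrite prednK // (shortest_path_nth_last sp) e_sym; apply.
Qed.

Lemma w_recolourable_nbr_u phi n : reach e L A alpha phi n -> c != phi w ->
  (forall y, y \in N phi -> y = u) -> n + size p + 2 <= bound -> w_recolourable.
Proof.
move=> R cw N_u le_bound.
have [psi R' [u_unf psi_w psi_nbrs]] := reach_unfrozen_u (reach_col alpha_col R).
have N_psi := coloured_nbrs_eq c psi_nbrs.
apply: (w_recolourable_single (reach_trans R R') (x := u)); rewrite ?psi_w ?N_psi //.
  by left.
by lia.
Qed.

Lemma w_recolourable_u_to_c phi n x b : reach e L A alpha phi n -> phi u = c ->
  x \in N phi -> frozen e L phi x -> free_colour e L phi w b -> b != c ->
  (forall y, y \in N phi -> y = u \/ y = x) -> n + size p + 5 <= bound -> w_recolourable.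
Proof.
move=> R phi_u x_N x_fr fb bc N_ux le_bound.
have cp := reach_col alpha_col R.
set phi4 := recolour phi w b.
have R4 : reach e L A alpha phi4 (n + 1).
  by apply: reach_trans R (reach_step e_sym e_irr _ cp fb); rewrite inE w_in_P.
have ewx : e w x by move: x_N; rewrite inE => /andP [].
have x_unf4 : unfrozen e L phi4 x.
  apply: free_unfrozen (frozen_recolour_nbr e_irr L_big cp x_fr _ _); first by rewrite e_sym.
  by case/free_colourP: fb.
have N4 : N phi4 = N phi := coloured_nbrs_recolour_w e_irr w c phi b.
have [phi5 R5 [N5_sub N5_fr]] := reach_clear_nbrs e_sym e_irr w c (reach_col alpha_col R4).
have phi5_w : phi5 w = b.
  by rewrite (reach_agree R5) ?inE ?e_irr // /phi4 recolour_id.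
have N_le2 : #|N phi| <= 2.
  apply: leq_trans (_ : #|[set u; x]| <= 2); last by rewrite cards2 ltnS leq_b1.
  by apply/subset_leq_card/subsetP => y /N_ux [] ->; rewrite !inE eqxx ?orbT.
have R5A : reach e L A alpha phi5 (n + 1 + (#|N phi4| - #|N phi5|)).
  by apply: (reach_trans R4 (reach_mono R5 _ (leqnn _))) => y /(coloured_nbrs_in_A R4).
apply: (w_recolourable_nbr_u R5A).
- by rewrite phi5_w eq_sym.
- move=> y y_N5; have [fr4 _] := N5_fr y y_N5.
  by case: (N_ux y); rewrite -?N4 ?N5_sub // => y_x; case: x_unf4; rewrite -y_x.
- by rewrite N4; lia.
Qed.

Lemma w_recolourable_recolour_u phi n x d : reach e L A alpha phi n -> c != phi w ->
  frozen e L phi w -> x \in N phi -> frozen e L phi x -> (forall y, y \in N phi -> y = x) ->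
  phi u != c -> free_colour e L phi u d -> n + size p + 6 <= bound -> w_recolourable.
Proof.
move=> R cw w_fr x_N x_fr N_x phi_u fd le_bound.
have cp := reach_col alpha_col R.
have [ewx phi_x] : e w x /\ phi x = c by move: x_N; rewrite inE => /andP [-> /eqP].
have ux : u != x by apply: contra_neq phi_u => ->.
have wu : w != u by apply: contraTneq w_u_edge => ->; rewrite e_irr.
pose phi3 := recolour phi u d.
have R3 : reach e L A alpha phi3 (n + 1).
  by apply: reach_trans R (reach_step e_sym e_irr _ cp fd); rewrite inE u_in_P.
have fb : free_colour e L phi3 w (phi u).
  by apply: (frozen_recolour_nbr e_irr L_big cp w_fr w_u_edge); case/free_colourP: fd.
have phi3_w : phi3 w = phi w by rewrite /phi3 recolour_ne.
have phi3_x : phi3 x = phi x by rewrite /phi3 recolour_ne // eq_sym.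
have N3 y : y \in N phi3 -> y = u /\ d = c \/ y = x.
  case: (eqVneq y u) => [-> | yu]; first by rewrite inE /phi3 recolour_id => /andP [_ /eqP]; left.
  by rewrite !inE /phi3 recolour_ne // => y_N; right; apply: N_x; rewrite inE.
have [dc | dnc] := eqVneq d c; last first.
  apply: (w_recolourable_single R3 _ (x := x)); rewrite ?phi3_w //; last by lia.
    by move=> y /N3 [[_ dc] |]; first by rewrite dc eqxx in dnc.
  by right; apply: free_unfrozen fb.
have x_N3 : x \in N phi3 by rewrite inE phi3_x phi_x ewx eqxx.
have nexu : ~~ e x u.
  by apply: (col_same_colour_nonadj (reach_col alpha_col R3)); rewrite phi3_x phi_x /phi3 recolour_id.
apply: (w_recolourable_u_to_c R3 _ x_N3 _ fb phi_u).
- by rewrite /phi3 recolour_id.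
- have xu : x != u by rewrite eq_sym.
  exact: (frozen_recolour_far L phi d xu nexu).2 x_fr.
- by move=> y /N3 [[-> _] | ->]; [left | right].
- by lia.
Qed.

Lemma w_recolourable_w_frozen phi n x : reach e L A alpha phi n -> c != phi w ->
  frozen e L phi w -> x \in N phi -> unfrozen e L phi u -> n + size p + 6 <= bound ->
  w_recolourable.
Proof.
move=> R cw w_fr x_N u_unf le_bound.
have [_ nbr_inj] := frozen_nbr_colours L_big (reach_col alpha_col R) w_fr.
have N_x y : y \in N phi -> y = x.
  move: x_N; rewrite !inE => /andP [ewx /eqP phi_x] /andP [ewy /eqP phi_y].
  by apply: nbr_inj; rewrite ?phi_x ?phi_y.
have [/unfrozenP x_unf | /frozenP x_fr] := boolP (has_free_colour e L phi x).
  by apply: (w_recolourable_single R cw N_x); [left | lia].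
have phi_u : phi u != c.
  apply: contraPneq u_unf => phi_u u_unf; apply: u_unf.
  by rewrite (N_x u) // inE w_u_edge phi_u eqxx.
move/unfrozenP/existsP: u_unf => [d fd].
exact: (w_recolourable_recolour_u R cw w_fr x_N x_fr N_x phi_u fd).
Qed.

End PenultimateVertex.

Lemma w_recolourable_holds : w_recolourable.
Proof.
have [alpha_w | cw] := eqVneq (alpha w) c.
  by exists alpha => //; apply: (reach_mono (reach_refl e L A alpha)).
have [phi1 R1 [N1_sub N1_fr]] := reach_clear_nbrs e_sym e_irr w c alpha_col.
have R1A : reach e L A alpha phi1 (#|N alpha| - #|N phi1|).
  by apply: (reach_mono R1) => // y; rewrite !inE => ->; rewrite orbT.
have cw1 : c != phi1 w by rewrite (reach_agree R1) ?inE ?e_irr // eq_sym.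
have N_deg : #|N alpha| <= deg e w.
  by apply/subset_leq_card/subsetP => y; rewrite !inE => /andP [].
have N1_le : #|N phi1| <= #|N alpha| by apply/subset_leq_card/subsetP.
have [/unfrozenP w_unf | /frozenP w_fr] := boolP (has_free_colour e L phi1 w).
  apply: (w_recolourable_finish R1A cw1); last by rewrite /=; lia.
  by right; split=> // y /N1_fr [].
have [N1_0 | [x x_N1]] := set_0Vmem (N phi1).
  apply: (w_recolourable_finish R1A cw1); last by rewrite N1_0 cards0 /=; lia.
  by left => y; rewrite N1_0 inE.
have p_nonempty : 0 < size p.
  rewrite lt0n; apply/eqP => p0.
  have w_v : w = v by rewrite -(shortest_path_nth_last sp) p0.
  by move: w_fr; rewrite w_v => /v_unfrozen.
have [phi2 R2 [u_unf phi2_w phi2_nbrs]] :=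
  reach_unfrozen_u (reach_col alpha_col R1A).
have N1_gt0 : 0 < #|N phi1| by apply/card_gt0P; exists x.
apply: (w_recolourable_w_frozen p_nonempty (reach_trans R1A R2) (x := x) _ _ _ u_unf).
- by rewrite phi2_w.
- exact: frozen_eq_nbhd phi2_w phi2_nbrs w_fr.
- by rewrite (coloured_nbrs_eq c phi2_nbrs).
- by rewrite /=; lia.
Qed.

End TargetColour.

Theorem mainTheorem7 (T C : finType) (e : rel T) (L : T -> {set C}) (v w : T)
    (alpha beta : T -> C) (p : seq T) :
  simple_graph e -> connected_graph e ->
  (forall u, deg e u + 1 <= #|L u|) -> deg e v + 2 <= #|L v| ->
  Lcolouring e L alpha -> unfrozen_colouring e L alpha ->
  Lcolouring e L beta -> unfrozen_colouring e L beta ->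
  shortest_path e v w p ->
  exists s : seq (T * C),
    recol_seq e L alpha s /\
    recol_final alpha s w = beta w /\
    unfrozen e L (recol_final alpha s) v /\
    (forall st, st \in s ->
       (st.1 \in v :: p) \/ (e w st.1 /\ alpha st.1 = beta w)) /\
    size s <= deg e w + 2 + 2 * size (v :: p).
Proof.
move=> [e_sym e_irr] _ L_big L_v alpha_col _ beta_col _ sp.
have [gamma [s s_seq [s_final s_size s_A]] gamma_w] :=
  w_recolourable_holds e_sym e_irr L_big L_v alpha_col (beta_col.1 w) sp.
exists s; split=> //; split; first by rewrite s_final.
split; first exact: big_list_unfrozen.
by split=> // st /s_A /orP [-> | /andP [? /eqP ?]]; [left | right].
Qed.
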